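(* Let $L'>0$ and let $\{|\tilde\psi(l)\rangle\}_{l\in[0,L']}$ be a continuous path of normalized pure states in a finite-dimensional Hilbert space. Assume there is a fixed $d\ge 0$ such that for all $l$ and all $\delta$ with $l,l+\delta\in[0,L']$, $$|\langle\tilde\psi(l)|\tilde\psi(l+\delta)\rangle|^2\ \ge\ 1-d^2\delta^2 .$$ Let $0<p<1$. Then the state $|\tilde\psi(L')\rangle$ can be prepared from $|\tilde\psi(0)\rangle$ with fidelity at least $p$ by $q=\lceil (L')^2d^2/(1-p)\rceil$ intermediate projective-measurement operations: there are points $0<l_1<\dots<l_q=L'$ such that, for any choice of projective-measurement operations $M_{l_j}$ onto $|\tilde\psi(l_j)\rangle$ (i.e. for any choice of the quantum operations $\mathcal E$ in their definition), the state $\rho_{\rm out}=M_{l_q}\circ\cdots\circ M_{l_1}(|\tilde\psi(0)\rangle\langle\tilde\psi(0)|)$ satisfies $\langle\tilde\psi(L')|\rho_{\rm out}|\tilde\psi(L')\rangle\ge p$.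
   Context: For a normalized state $|\tilde\psi(l)\rangle$ let $P_l=|\tilde\psi(l)\rangle\langle\tilde\psi(l)|$. A projective-measurement operation onto $|\tilde\psi(l)\rangle$ is a quantum operation (completely positive trace-preserving map) of the form $M_l(\rho)=P_l\rho P_l+\mathcal E\big((\mathbb 1-P_l)\rho(\mathbb 1-P_l)\big)$, where $\mathcal E$ is an arbitrary quantum operation (which may depend on $l$). *)

From HB Require Import structures.
From mathcomp Require Import all_boot all_order all_algebra.
From mathcomp Require Import reals.
From mathcomp Require Import complex.
Set Implicit Arguments. Unset Strict Implicit. Unset Printing Implicit Defensive.
Import Order.TTheory GRing.Theory Num.Theory.
Local Open Scope ring_scope.

Section QDefs.
Variables (R : realType) (n : nat).
Local Notation C := (R[i]).

Definition cR (x : R) : C := Complex x 0.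

Definition adjmx (m k : nat) (A : 'M[C]_(m, k)) : 'M[C]_(k, m) :=
  (map_mx Num.conj A)^T.

Definition cdot (u v : 'cV[C]_n) : C := (adjmx u *m v) 0 0.

Definition proj (u : 'cV[C]_n) : 'M[C]_n := u *m adjmx u.

(* A family of k x k blocks (each an n x n matrix), i.e. an operator on
   C^k (x) C^n, is positive semidefinite *)
Definition psd_block (k : nat) (X : 'I_k -> 'I_k -> 'M[C]_n) : Prop :=
  forall v : 'I_k -> 'cV[C]_n,
    0 <= \sum_(a < k) \sum_(b < k) (adjmx (v a) *m X a b *m v b) 0 0.

(* Complete positivity: id_k (x) E maps PSD operators
   on C^k (x) C^n (written as k x k block matrices) to PSD operators,
   for every k. *)
Definition quantum_operation (E : 'M[C]_n -> 'M[C]_n) : Prop :=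
  [/\ (forall (a : C) (X Y : 'M[C]_n), E (a *: X + Y) = a *: E X + E Y),
      (forall k (X : 'I_k -> 'I_k -> 'M[C]_n),
          psd_block X -> psd_block (fun a b => E (X a b)))
    & (forall X : 'M[C]_n, \tr (E X) = \tr X)].

Definition proj_meas (u : 'cV[C]_n) (E : 'M[C]_n -> 'M[C]_n) (rho : 'M[C]_n)
  : 'M[C]_n :=
  let P := proj u in
  P *m rho *m P + E ((1%:M - P) *m rho *m (1%:M - P)).

Definition sqnorm (u : 'cV[C]_n) : C := cdot u u.

End QDefs.

From HB Require Import structures.
From mathcomp Require Import all_boot all_order all_algebra.
From mathcomp Require Import reals.
From mathcomp Require Import complex.
From mathcomp Require Import ring lra.

Set Implicit Arguments.
Unset Strict Implicit.
Unset Printing Implicit Defensive.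
Import Order.TTheory GRing.Theory Num.Theory.
Local Open Scope ring_scope.

(* Measure at the equally spaced points l_k = k L'/q.  Writing
   a = 1 - d^2 (L'/q)^2 and P_u = |u><u|, the state after k measurements
   dominates a^k P_{psi(l_k)} in the PSD order: measuring onto u keeps
   P_u rho P_u >= a^k |<w|u>|^2 P_u >= a^(k+1) P_u, and the other branch of
   the operation is PSD since quantum operations are positive.  The final
   fidelity is therefore at least a^q >= 1 - q d^2 (L'/q)^2 >= p by
   Bernoulli's inequality and the choice of q. *)

Section PSDChain.
Variables (R : realType) (n : nat).
Local Notation C := R[i].

Lemma adjmxM m k l (A : 'M[C]_(m, k)) (B : 'M[C]_(k, l)) :
  adjmx (A *m B) = adjmx B *m adjmx A.
Proof. by rewrite /adjmx map_mxM trmx_mul. Qed.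

Lemma adjmxB m k (A B : 'M[C]_(m, k)) : adjmx (A - B) = adjmx A - adjmx B.
Proof. by apply/matrixP=> i j; rewrite !mxE rmorphB. Qed.

Lemma adjmx1 : adjmx (1%:M : 'M[C]_n) = 1%:M.
Proof. by apply/matrixP=> i j; rewrite !mxE rmorph_nat eq_sym. Qed.

Lemma adjmx_proj (u : 'cV[C]_n) : adjmx (proj u) = proj u.
Proof.
rewrite /proj adjmxM; congr (_ *m _).
by apply/matrixP=> i j; rewrite !mxE conjCK.
Qed.

Lemma mulmx11 (A B : 'M[C]_1) : (A *m B) 0 0 = A 0 0 * B 0 0.
Proof. by rewrite !mxE big_ord1. Qed.

Lemma cdot_conj (u w : 'cV[C]_n) : cdot u w = (cdot w u)^*.
Proof.
rewrite /cdot !mxE rmorph_sum; apply: eq_bigr => k _.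
by rewrite !mxE rmorphM /= conjCK mulrC.
Qed.

Lemma cdot_mul_conj (v w : 'cV[C]_n) : cdot v w * cdot w v = `|cdot w v| ^+ 2.
Proof. by rewrite normCK -cdot_conj mulrC. Qed.

Lemma proj_fidelity (v w : 'cV[C]_n) :
  cdot v (proj w *m v) = `|cdot w v| ^+ 2.
Proof. by rewrite /cdot /proj !mulmxA -mulmxA mulmx11 cdot_mul_conj. Qed.

Lemma proj_mulmx_proj (u w : 'cV[C]_n) :
  proj u *m proj w *m proj u = `|cdot w u| ^+ 2 *: proj u.
Proof.
rewrite /proj -cdot_mul_conj.
have -> : u *m adjmx u *m (w *m adjmx w) *m (u *m adjmx u)
        = u *m (adjmx u *m w) *m (adjmx w *m u) *m adjmx u by rewrite !mulmxA.
rewrite [adjmx u *m w]mx11_scalar [adjmx w *m u]mx11_scalar.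
by rewrite !mul_mx_scalar -!scalemxAl scalerA mulrC.
Qed.

Definition psd (X : 'M[C]_n) :=
  forall v : 'cV[C]_n, 0 <= (adjmx v *m X *m v) 0 0.

Lemma psd0 : psd 0.
Proof. by move=> v; rewrite mulmx0 mul0mx mxE. Qed.

Lemma psdD X Y : psd X -> psd Y -> psd (X + Y).
Proof. by move=> hX hY v; rewrite mulmxDr mulmxDl mxE addr_ge0. Qed.

Lemma psdZ (c : C) X : 0 <= c -> psd X -> psd (c *: X).
Proof. by move=> hc hX v; rewrite -scalemxAr -scalemxAl mxE mulr_ge0. Qed.

Lemma psd_adj_conj (A X : 'M[C]_n) : psd X -> psd (adjmx A *m X *m A).
Proof.
move=> hX v; have := hX (A *m v).
by rewrite adjmxM !mulmxA.
Qed.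

Lemma psd_proj u : psd (proj u).
Proof. by move=> v; rewrite -mulmxA -[_ 0 0]/(cdot v _) proj_fidelity exprn_ge0. Qed.

Lemma psd_quantum_operation E X : quantum_operation E -> psd X -> psd (E X).
Proof.
case=> _ E_cp _ hX v.
have := E_cp 1%N (fun _ _ => X) _ (fun _ => v).
by rewrite !big_ord1; apply=> w; rewrite !big_ord1.
Qed.

Lemma psd_sub_proj_fidelity (v w : 'cV[C]_n) rho (c : C) :
  psd (rho - c *: proj w) -> c * `|cdot w v| ^+ 2 <= cdot v (rho *m v).
Proof.
move=> /(_ v); rewrite mulmxBr mulmxBl -scalemxAr -scalemxAl.
have mxE11 (A B : 'M[C]_1) : (A - c *: B) 0 0 = A 0 0 - c * B 0 0 by rewrite !mxE.
rewrite mxE11 -[adjmx v *m proj w *m v]mulmxA -[adjmx v *m rho *m v]mulmxA.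
by rewrite -/(cdot v (proj w *m v)) proj_fidelity subr_ge0.
Qed.

Lemma psd_proj_meas_sub (u w : 'cV[C]_n) rho (c b : C) E :
  quantum_operation E -> 0 <= c -> b <= `|cdot w u| ^+ 2 ->
  psd (rho - c *: proj w) -> psd (proj_meas u E rho - (c * b) *: proj u).
Proof.
move=> hE hc hb hX; set P := proj u.
have psd_rho : psd rho.
  by rewrite -(subrK (c *: proj w) rho); apply/psdD/psdZ/psd_proj.
have -> : proj_meas u E rho - (c * b) *: P =
    (adjmx P *m (rho - c *: proj w) *m P + (c * (`|cdot w u| ^+ 2 - b)) *: P)
    + E (adjmx (1%:M - P) *m rho *m (1%:M - P)).
  have sandwich : P *m (rho - c *: proj w) *m P
      = P *m rho *m P - (c * `|cdot w u| ^+ 2) *: P.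
    by rewrite mulmxBr mulmxBl -scalemxAr -scalemxAl proj_mulmx_proj scalerA.
  rewrite /proj_meas adjmxB adjmx1 adjmx_proj sandwich mulrBr scalerBl.
  by rewrite addrA subrK addrAC.
apply: psdD; last exact/psd_quantum_operation/psd_adj_conj.
apply: psdD; first exact: psd_adj_conj.
by apply/psdZ/psd_proj; rewrite mulr_ge0 // subr_ge0.
Qed.

Lemma psd_proj_meas_chain (u : nat -> 'cV[C]_n) (Es : nat -> 'M[C]_n -> 'M[C]_n)
    (b : C) (m : nat) :
  0 <= b ->
  (forall k, (k < m)%N -> b <= `|cdot (u k) (u k.+1)| ^+ 2) ->
  (forall j, (j < m)%N -> quantum_operation (Es j)) ->
  forall k, (k <= m)%N ->
  psd (foldl (fun rho j => proj_meas (u j.+1) (Es j) rho) (proj (u 0)) (iota 0 k)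
       - b ^+ k *: proj (u k)).
Proof.
move=> hb hov hE; elim=> [|k IHk] hk; first by rewrite scale1r subrr; exact: psd0.
rewrite -addn1 iotaD foldl_cat /= add0n addn1 exprSr.
apply: (@psd_proj_meas_sub _ (u k)).
- exact: hE.
- exact: exprn_ge0.
- exact: hov.
- exact: IHk (ltnW hk).
Qed.

End PSDChain.

Lemma bernoulli_ineq (F : realFieldType) (t : F) k :
  0 <= t <= 1 -> 1 - k%:R * t <= (1 - t) ^+ k.
Proof.
case/andP=> t_ge0 t_le1; elim: k => [|k IHk]; first by rewrite mul0r subr0.
rewrite exprSr -addn1 natrD.
have : 0 <= ((1 - t) ^+ k - (1 - k%:R * t)) * (1 - t) by rewrite mulr_ge0 ?subr_ge0.
have : 0 <= k%:R * t * t by rewrite !mulr_ge0.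
nra.
Qed.

Lemma ceil_absz_ge (F : archiRealFieldType) (x : F) :
  0 <= x -> x <= (`|Num.ceil x|%N)%:R.
Proof.
move=> x_ge0; rewrite natr_absz ger0_norm ?ceil_ge //.
by rewrite ceil_ge0 (lt_le_trans _ x_ge0) // ltrN10.
Qed.

Lemma spacing_sq_le (F : realFieldType) (L d p : F) (q : nat) :
  (0 < q)%N -> L ^+ 2 * d ^+ 2 <= q%:R * (1 - p) ->
  q%:R * (d ^+ 2 * (L / q%:R) ^+ 2) <= 1 - p.
Proof.
move=> q_gt0 hq; have q_pos : 0 < q%:R :> F by rewrite ltr0n.
have -> : q%:R * (d ^+ 2 * (L / q%:R) ^+ 2) = L ^+ 2 * d ^+ 2 / q%:R.
  by field; rewrite gt_eqF.
by rewrite ler_pdivrMr // [(1 - p) * _]mulrC.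
Qed.

Lemma bernoulli_fidelity (F : realFieldType) (t p : F) (q : nat) :
  (0 < q)%N -> 0 < p -> q%:R * t <= 1 - p -> 0 <= t ->
  0 <= 1 - t /\ p <= (1 - t) ^+ q.
Proof.
move=> q_gt0 p_gt0 qt_le t_ge0.
have t_le : t <= q%:R * t by rewrite ler_peMl // ler1n.
have t_le1 : t <= 1 by lra.
have := @bernoulli_ineq _ t q; rewrite t_ge0 t_le1 => /(_ isT) bern.
split; lra.
Qed.

Section Grid.
Variables (F : realFieldType) (L : F) (q : nat).

Definition grid (k : nat) : F := k%:R * L / q%:R.

Definition grid_points : seq F := mkseq (grid \o succn) q.

Hypotheses (L_gt0 : 0 < L) (q_gt0 : (0 < q)%N).

Lemma grid_ge0_le k : (k <= q)%N -> 0 <= grid k <= L.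
Proof.
move=> kq; apply/andP; split; first by rewrite divr_ge0 // mulr_ge0 // ltW.
by rewrite ler_pdivrMr ?ltr0n // mulrC ler_pM2l // ler_nat.
Qed.

Lemma gridS k : grid k + L / q%:R = grid k.+1.
Proof. by rewrite /grid -addn1 natrD !mulrDl mul1r. Qed.

Lemma grid_last : grid q = L.
Proof. by rewrite /grid mulrAC divff ?mul1r // pnatr_eq0 -lt0n. Qed.

Lemma nth_grid_points k : (k <= q)%N -> nth 0 (0 :: grid_points) k = grid k.
Proof.
case: k => [|k] kq; first by rewrite /grid !mul0r.
by rewrite /= nth_mkseq.
Qed.

Lemma sorted_grid_points : sorted <%R (0 :: grid_points).
Proof.
have -> : 0 :: grid_points = map grid (iota 0 q.+1).
  rewrite /= /grid !mul0r; congr (_ :: _).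
  by rewrite /grid_points /mkseq (iotaDl 1 0 q) -map_comp.
rewrite sorted_map; apply: sub_sorted (iota_ltn_sorted 0 q.+1) => i j ij /=.
by rewrite /grid ltr_pM2r ?invr_gt0 ?ltr0n // ltr_pM2r // ltr_nat.
Qed.

End Grid.

Theorem lemma1 (R : realType) (n : nat) (L' d p : R)
  (psi : R -> 'cV[R[i]]_n) :
  0 < L' ->
  (* normalized states *)
  (forall l, 0 <= l <= L' -> cdot (psi l) (psi l) = 1) ->
  (* continuity of the path on [0, L'] *)
  (forall l0, 0 <= l0 <= L' -> forall e : R, 0 < e ->
     exists2 del : R, 0 < del & forall l, 0 <= l <= L' -> `|l - l0| < del ->
       sqnorm (psi l - psi l0) < cR e) ->
  0 <= d ->
  (forall l del, 0 <= l <= L' -> 0 <= l + del <= L' ->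
     cR (1 - d ^+ 2 * del ^+ 2) <= `|cdot (psi l) (psi (l + del))| ^+ 2) ->
  0 < p < 1 ->
  let q := `|Num.ceil (L' ^+ 2 * d ^+ 2 / (1 - p))|%N in
  exists s : seq R,
    [/\ size s = q, sorted <%R (0 :: s), (q = 0%N \/ last 0 s = L') &
      forall Es : nat -> 'M[R[i]]_n -> 'M[R[i]]_n,
        (forall j, (j < q)%N -> quantum_operation (Es j)) ->
        let rho_out :=
          foldl (fun rho j => proj_meas (psi (nth 0 s j)) (Es j) rho)
                (proj (psi 0)) (iota 0 q) in
        cR p <= cdot (psi L') (rho_out *m psi L')].
Proof.
move=> L_gt0 hnorm _ d_ge0 hov /andP[p_gt0 p_lt1] q.
have hq : L' ^+ 2 * d ^+ 2 <= q%:R * (1 - p).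
  rewrite -ler_pdivrMr ?subr_gt0 //; apply: ceil_absz_ge.
  by rewrite divr_ge0 ?mulr_ge0 ?sqr_ge0 // ltW // subr_gt0.
have [q0|q_gt0] := posnP q.
  exists [::]; split=> // [|Es _]; first by left.
  rewrite q0 /= proj_fidelity.
  have := hov 0 L'; rewrite add0r !lexx (ltW L_gt0) => /(_ isT isT).
  apply: le_trans; rewrite /cR !complexr0 lecR.
  by move: hq; rewrite q0 mul0r; nra.
exists (grid_points L' q); split.
- by rewrite size_mkseq.
- exact: sorted_grid_points.
- by right; rewrite -nth_last size_mkseq nth_mkseq ?prednK //= prednK // grid_last.
move=> Es hE /=.
set t := d ^+ 2 * (L' / q%:R) ^+ 2.
have t_ge0 : 0 <= t by rewrite mulr_ge0 ?sqr_ge0.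
have [a_ge0 p_le] := bernoulli_fidelity q_gt0 p_gt0 (spacing_sq_le q_gt0 hq) t_ge0.
have b_ge0 : 0 <= cR (1 - t) by rewrite /cR complexr0 ler0c.
set u := fun k => psi (nth 0 (0 :: grid_points L' q) k).
have overlap k : (k < q)%N -> cR (1 - t) <= `|cdot (u k) (u k.+1)| ^+ 2.
  move=> kq; rewrite /u !nth_grid_points // 1?ltnW // -gridS.
  by apply: hov; rewrite ?gridS grid_ge0_le // ltnW.
have chain := psd_proj_meas_chain b_ge0 overlap hE (leqnn q).
apply: le_trans (psd_sub_proj_fidelity (psi L') chain).
have u_q : u q = psi L' by rewrite /u nth_grid_points // grid_last.
rewrite u_q -cdot_mul_conj hnorm; last by rewrite lexx ltW.
by rewrite !mulr1 /cR !complexr0 -rmorphXn /= lecR.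
Qed.
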